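(* Let $g(\tau_L,\tau_R) = (\tau_R^2, \tau_L\tau_R)$, $\alpha_0(\tau_L,\tau_R) = \tau_L\tau_R + 1$, $\phi_0(\tau_L,\tau_R) = \tau_L\tau_R + \tau_L - \tau_R$, and for $n \ge 0$ let $$\mathcal{R}_n = \left\{ (\tau_L,\tau_R) \in \mathbb{R}^2 \,\middle|\, \tau_R < -1,\ \phi_0\big(g^n(\tau_L,\tau_R)\big) > 0,\ \phi_0\big(g^{n+1}(\tau_L,\tau_R)\big) \le 0,\ \alpha_0(\tau_L,\tau_R) < 0 \right\}.$$ If $(\tau_L,\tau_R) \in \mathcal{R}_n$ with $n \ge 1$, then $g(\tau_L,\tau_R) \in \mathcal{R}_{n-1}$.
   Context: These objects arise from the skew tent map family $x \mapsto \tau_L x + 1$ for $x \le 0$, $x \mapsto \tau_R x + 1$ for $x \ge 0$; $g$ is the renormalisation operator associated with the substitution $(L,R)\mapsto(RR,LR)$, and $g^n$ denotes the $n$-fold composition. *)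

From Stdlib Require Import Reals.
Open Scope R_scope.

Definition g (p : R * R) : R * R := (snd p * snd p, fst p * snd p).

Fixpoint g_iter (n : nat) (p : R * R) : R * R :=
  match n with
  | O => p
  | S k => g (g_iter k p)
  end.

Definition alpha0 (p : R * R) : R := fst p * snd p + 1.
Definition phi0 (p : R * R) : R := fst p * snd p + fst p - snd p.

Definition region (n : nat) (p : R * R) : Prop :=
  snd p < -1 /\
  phi0 (g_iter n p) > 0 /\
  phi0 (g_iter (S n) p) <= 0 /\
  alpha0 p < 0.

(* The phi0-conditions of region n at p are, read through g^(k+1) = g^k o g,
   exactly those of region (n-1) at g p.  The remaining conditions follow from
   the second coordinate tL*tR = alpha0 - 1 < -1 of g p and from
   alpha0 (g p) = tR^2 (tL tR) + 1 < -tR^2 + 1 < 0. *)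
From Stdlib Require Import Reals Lra Lia.
Open Scope R_scope.

Lemma g_iter_S_r (k : nat) (p : R * R) : g_iter (S k) p = g_iter k (g p).
Proof.
  induction k as [|k IH]; [reflexivity|].
  change (g (g_iter (S k) p) = g (g_iter k (g p))).
  now rewrite IH.
Qed.

Lemma snd_g_lt_m1 (p : R * R) : alpha0 p < 0 -> snd (g p) < -1.
Proof. destruct p as [tL tR]; unfold alpha0; simpl; lra. Qed.

Lemma alpha0_g_neg (p : R * R) :
  1 <= snd p * snd p -> alpha0 p < 0 -> alpha0 (g p) < 0.
Proof.
  destruct p as [tL tR]; unfold alpha0; simpl; intros Hsq Ha.
  nra.
Qed.

Lemma region_S_g (m : nat) (p : R * R) : region (S m) p -> region m (g p).
Proof.
  intros [HtR [Hphi [Hphi' Ha]]].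
  rewrite g_iter_S_r in Hphi, Hphi'.
  assert (Hsq : 1 <= snd p * snd p) by nra.
  repeat split; auto using snd_g_lt_m1, alpha0_g_neg.
Qed.

Theorem proposition2p2 (n : nat) (tL tR : R) :
  (1 <= n)%nat -> region n (tL, tR) -> region (n - 1) (g (tL, tR)).
Proof.
  intros Hn Hreg.
  destruct n as [|m]; [lia|].
  replace (S m - 1)%nat with m by lia.
  now apply region_S_g.
Qed.
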